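(* Let $c \geq 1$, $r \geq 0$, $k \geq 1$ be integers. Then every $c$-NSOBDD computing the function $F_{r,k}$ has size at least $2^{rk/(4c-2)}$.
   Context: For a graph $G$, the CNF $CNF(G)$ has a variable $X_u$ for each vertex $u$ and a variable $X_{u,v}=X_{v,u}$ for each edge $\{u,v\}$; its clauses are $(X_u \vee X_{u,v} \vee X_v)$ for each edge $\{u,v\}$. $T_r$ is the complete binary tree of height $r$; $CT_{r,k}$ is obtained from $T_r$ by replacing each node by a $k$-clique and, for each edge $\{a,b\}$ of $T_r$, joining every vertex of the clique of $a$ to every vertex of the clique of $b$; $F_{r,k}=CNF(CT_{r,k})$. A non-deterministic branching program is a directed acyclic graph with one root and one leaf, some of whose edges are labelled by literals of variables. A path is consistent if it does not contain two edges labelled by opposite literals of the same variable; a consistent root-leaf path is a computational path. The program computes $F$: an assignment $S$ (viewed as a set of literals) satisfies $F$ iff some computational path has all its edge labels in $S$. A $c$-NSOBDD (nondeterministic semantic $c$-OBDD) is such a program for which there is a permutation $SV$ of its variables such that every computational path $P$ can be written as a concatenation $P=P_1+\dots+P_c$ of subpaths where on each $P_i$ each variable occurs at most once as a label and the sequence of labels along $P_i$ is ordered according to $SV$. Size is the number of nodes. *)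

From mathcomp Require Import all_boot.
From Stdlib Require Reals.

Set Implicit Arguments.
Unset Strict Implicit.
Unset Printing Implicit Defensive.

(* An edge {u,v} is represented as the 2-element vertex set [set u; v]. *)
Definition is_edge_set (V : finType) (e : rel V) (A : {set V}) : bool :=
  [exists u, exists v, e u v && (A == [set u; v])].

Definition edgeT (V : finType) (e : rel V) : finType :=
  {A : {set V} | is_edge_set e A}.

(* Variables of CNF(G): X_u (inl u) for vertices, X_{u,v} (inr A) for edges. *)
Definition cnf_var (V : finType) (e : rel V) : finType := (V + edgeT e)%type.

(* CNF(G) evaluated at an assignment: for each edge A = {u,v} the clause
   (X_u \/ X_{u,v} \/ X_v). *)
Definition CNF (V : finType) (e : rel V) (a : cnf_var e -> bool) : bool :=
  [forall A : edgeT e,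
     a (inr A) || [exists u in val A, a (inl u)]].

(* T_r: complete binary tree of height r (2^(r+1)-1 nodes), heap-indexed: *)
(* node j : 'I_(2^(r+1)-1) stands for position j+1; the children of      *)
(* position p are 2p and 2p+1.                                           *)
Definition Tnode (r : nat) : finType := 'I_(2 ^ r.+1 - 1).

Definition Tchild (r : nat) (a b : Tnode r) : bool :=
  ((b : nat).+1 == ((a : nat).+1).*2) || ((b : nat).+1 == (((a : nat).+1).*2).+1).

Definition Tadj (r : nat) : rel (Tnode r) := fun a b => Tchild a b || Tchild b a.

Definition CTvert (r k : nat) : finType := (Tnode r * 'I_k)%type.

Definition CTadj (r k : nat) : rel (CTvert r k) := fun x y =>
  ((x.1 == y.1) && (x.2 != y.2)) || Tadj x.1 y.1.

Definition Fvar (r k : nat) : finType := cnf_var (@CTadj r k).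

Definition F (r k : nat) : (Fvar r k -> bool) -> bool := @CNF _ (@CTadj r k).

(* Nodes: finType N; edges: finType E with source/target maps and an    *)
(* optional label, a literal (x, b) meaning "x = b".                     *)

Section BP.
Variables (X N E : finType) (src dst : E -> N) (lab : E -> option (X * bool)).

Fixpoint walk (u : N) (p : seq E) (v : N) : Prop :=
  match p with
  | [::] => u = v
  | ed :: p' => src ed = u /\ walk (dst ed) p' v
  end.

Definition labels (p : seq E) : seq (X * bool) := pmap lab p.

Definition consistent (p : seq E) : Prop :=
  forall x : X, ~ ((x, true) \in labels p /\ (x, false) \in labels p).

Definition is_BP (root leaf : N) : Prop :=
  (forall u p, walk u p u -> p = [::]) /\
  (forall n : N, (forall ed, dst ed != n) <-> n = root) /\
  (forall n : N, (forall ed, src ed != n) <-> n = leaf).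

Definition computational (root leaf : N) (p : seq E) : Prop :=
  walk root p leaf /\ consistent p.

Definition computes (root leaf : N) (f : (X -> bool) -> bool) : Prop :=
  forall a : X -> bool,
    f a <-> exists p, computational root leaf p /\
                      forall l, l \in labels p -> a l.1 = l.2.

Definition ordered_by (SV : seq X) (q : seq E) : bool :=
  let vs := map fst (labels q) in
  uniq vs && sorted (fun x y => index x SV <= index y SV) vs.

Definition NSOBDD (c : nat) (root leaf : N) : Prop :=
  exists SV : seq X, perm_eq SV (enum X) /\
    forall p, computational root leaf p ->
      exists ps : seq (seq E),
        size ps = c /\ flatten ps = p /\ all (ordered_by SV) ps.

End BP.

(* Cut the variable order of a c-NSOBDD after its first t variables.  An
   accepted path splits into 2c segments reading alternately variables before
   and after the cut, joined at 2c-1 nodes; two satisfying assignments whose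
   paths pass through the same 2c-1 nodes can be spliced (one read before the
   cut, the other after) into an accepted, hence satisfying, assignment.  A
   matching of M edges of CT_{r,k} going across the cut gives 2^M satisfying
   assignments no two of which splice (make the matched edge variables false
   and give the ends of the j-th edge the values S_j and ~~ S_j), so
   2^M <= |N|^(2c-1).  A cut with M >= rk/2 is built by induction on subtrees
   of height h: of the three thresholds found for three grandchildren, take the
   median; it keeps the matching of the middle one, and along the tree walk
   between the other two the number of vertices before the cut in the two
   cliques of an edge passes through k, which yields k further matched pairs. *)

From Stdlib Require Import Reals Lra.
From mathcomp Require Import all_boot zify.

Set Implicit Arguments.
Unset Strict Implicit.
Unset Printing Implicit Defensive.

Definition splice (X : Type) (side : pred X) (a b : X -> bool) (x : X) : bool :=
  if side x then a x else b x.

Definition before (X : eqType) (SV : seq X) (t : nat) (x : X) : bool := index x SV < t.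

Section CrossingSequences.
Variables (X N E : finType) (src dst : E -> N) (lab : E -> option (X * bool)).
Local Notation walk := (walk src dst).
Local Notation labels := (labels lab).

Lemma walk_cat u p q v :
  walk u (p ++ q) v <-> exists w, walk u p w /\ walk w q v.
Proof.
elim: p u => [|ed p IH] u /=.
  by split; [exists u | case=> w [->]].
split; first by case=> Hs /IH [w [H1 H2]]; exists w.
by case=> w [[Hs H1] H2]; split => //; apply/IH; exists w.
Qed.

Definition walk_segments u v (P : seq (seq E)) (bs : seq N) :=
  size P = (size bs).+1 /\
  forall n, n < size P ->
    walk (nth u (u :: bs) n) (nth [::] P n) (nth v (rcons bs v) n).

Lemma walk_segments_flatten u v P bs :
  walk_segments u v P bs -> walk u (flatten P) v.
Proof.
elim: bs u P => [|b bs IH] u [|q P] //=; try by case.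
  case=> [[/eqP]]; rewrite size_eq0 => /eqP -> H.
  by have := H 0 isT; rewrite /= cats0.
case=> [[Hs] H]; apply/walk_cat; exists b; split; first exact: (H 0).
apply: IH; split => // n Hn.
by have := H n.+1 Hn; rewrite /= (set_nth_default b u) //= -Hs.
Qed.

Lemma walk_flatten_segments u v P :
  walk u (flatten P) v -> P != [::] -> exists bs, walk_segments u v P bs.
Proof.
elim: P u => [|q P IH] u //= H _.
case: P IH H => [|q' P] IH H.
  by exists [::]; split => // [[|n]] //= _; rewrite -(cats0 q).
move/walk_cat: H => [w [H1 /IH [//|bs [Hs Hb]]]].
exists (w :: bs); split; first by rewrite /= -Hs.
move=> [|n] Hn //=; have := Hb n Hn.
by rewrite /= (set_nth_default w u) //; move: Hn Hs => /= Hn [<-].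
Qed.

Definition on_side (side : pred X) (b : bool) (q : seq E) :=
  forall l, l \in labels q -> side l.1 = b.

Lemma labels_cons ed q :
  labels (ed :: q) = if lab ed is Some l then l :: labels q else labels q.
Proof. by rewrite /labels /=; case: (lab ed). Qed.

Lemma labels_flatten (Q : seq (seq E)) : labels (flatten Q) = flatten (map labels Q).
Proof. by elim: Q => //= q Q <-; rewrite /labels pmap_cat. Qed.

Lemma sorted_split (SV : seq X) t q :
  sorted (fun x y => index x SV <= index y SV) (map fst (labels q)) ->
  exists a b, [/\ q = a ++ b, on_side (before SV t) true a & on_side (before SV t) false b].
Proof.
elim: q => [|ed q IH]; first by exists [::], [::].
rewrite labels_cons; case Hl: (lab ed) => [[x s]|] /= Hs; last first.
  have [a [b [-> Ha Hb]]] := IH Hs.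
  by exists (ed :: a), b; split => // l; rewrite labels_cons Hl; apply: Ha.
have [a [b [Hq Ha Hb]]] := IH (path_sorted Hs).
case Hx: (before SV t x).
  exists (ed :: a), b; split => [|l|//]; first by rewrite Hq.
  by rewrite labels_cons Hl in_cons => /orP [/eqP -> //|]; apply: Ha.
exists [::], (ed :: q); split => // l.
rewrite labels_cons Hl in_cons => /orP [/eqP -> //|Hin].
have Htr : transitive (fun x y => index x SV <= index y SV).
  by move=> ? ? ?; exact: leq_trans.
have /allP/(_ l.1 (map_f _ Hin)) Hxl := order_path_min Htr Hs.
by apply: contraFF Hx => Hlt; exact: leq_ltn_trans Hxl Hlt.
Qed.

Lemma ordered_pieces_alternate (SV : seq X) t ps :
  all (ordered_by lab SV) ps ->
  exists P : seq (seq E), [/\ size P = (size ps).*2, flatten P = flatten ps &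
    forall n, on_side (before SV t) (~~ odd n) (nth [::] P n)].
Proof.
elim: ps => [_|q ps IH /= /andP [/andP [_ Hq] /IH [P [HsP HfP HP]]]].
  by exists [::]; split => // n l; rewrite nth_nil.
have [a [b [Hab Ha Hb]]] := sorted_split t Hq.
exists (a :: b :: P); split; first by rewrite /= HsP.
  by rewrite /= HfP Hab catA.
by case=> [|[|n]] //=; rewrite negbK.
Qed.

Lemma consistent_of_agree (a : X -> bool) p :
  (forall l, l \in labels p -> a l.1 = l.2) -> consistent lab p.
Proof. by move=> H x [/H /= H1 /H /= H2]; rewrite H1 in H2. Qed.

Variables (root leaf : N).

Definition ordered_paths (c : nat) (SV : seq X) : Prop :=
  forall p, computational src dst lab root leaf p ->
    exists ps : seq (seq E), size ps = c /\ flatten ps = p /\ all (ordered_by lab SV) ps.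

Definition crossing_witness (side : pred X) (a : X -> bool) (bs : seq N) :=
  exists P, [/\ walk_segments root leaf P bs,
    forall n, on_side side (~~ odd n) (nth [::] P n) &
    forall l, l \in labels (flatten P) -> a l.1 = l.2].

Lemma crossing_witness_exists (c : nat) (f : (X -> bool) -> bool) (SV : seq X) t a :
  0 < c -> computes src dst lab root leaf f ->
  ordered_paths c SV ->
  f a -> exists bs : (c.*2.-1).-tuple N, crossing_witness (before SV t) a bs.
Proof.
move=> c_gt0 Hcomp Hord /(Hcomp a).1 [p [Hp Ha]].
have [ps [Hsize [Hflat Hps]]] := Hord p Hp.
have [P [HsP HfP Hside]] := ordered_pieces_alternate t Hps.
have P_nil : P != [::] by rewrite -size_eq0 HsP Hsize double_eq0 -lt0n.
have HwP : walk root (flatten P) leaf by rewrite HfP Hflat; case: Hp.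
have [bs Hbs] := walk_flatten_segments HwP P_nil.
have Hsz : size bs == c.*2.-1 by rewrite -Hsize -HsP (proj1 Hbs).
by exists (Tuple Hsz), P; split => // l; rewrite HfP Hflat; exact: Ha.
Qed.

Lemma crossing_witness_splice (f : (X -> bool) -> bool) side a b bs :
  computes src dst lab root leaf f ->
  crossing_witness side a bs -> crossing_witness side b bs ->
  f (splice side a b).
Proof.
move=> Hcomp [Pa [[Hsa Hwa] Hsda Hla]] [Pb [[Hsb Hwb] Hsdb Hlb]].
pose Q := mkseq (fun n => nth [::] (if odd n then Pb else Pa) n) (size bs).+1.
have Hlab l : l \in labels (flatten Q) -> splice side a b l.1 = l.2.
  rewrite labels_flatten => /flattenP [_ /mapP [_ /mapP [n Hn ->] ->] Hl].
  move: Hn; rewrite mem_iota add0n /splice => Hn.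
  have inP (P : seq (seq E)) : size P = (size bs).+1 ->
      l \in labels (nth [::] P n) -> l \in labels (flatten P).
    move=> HsP Hin; rewrite labels_flatten; apply/flattenP.
    by exists (labels (nth [::] P n)) => //; apply/map_f/mem_nth; rewrite HsP.
  case Ho: (odd n) Hl => Hl.
    by rewrite (Hsdb n _ Hl) Ho Hlb // inP.
  by rewrite (Hsda n _ Hl) Ho Hla // inP.
apply/(Hcomp _).2; exists (flatten Q); split => //; split.
  apply: (@walk_segments_flatten _ _ _ bs); split; first by rewrite size_mkseq.
  move=> n; rewrite size_mkseq => Hn; rewrite nth_mkseq //.
  by case: (odd n); [apply: Hwb; rewrite Hsb | apply: Hwa; rewrite Hsa].
exact: consistent_of_agree Hlab.
Qed.

Theorem fooling_set_bound (c : nat) (f : (X -> bool) -> bool) (SV : seq X) t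
    (I : finType) (w : I -> X -> bool) :
  0 < c -> computes src dst lab root leaf f ->
  ordered_paths c SV ->
  (forall i, f (w i)) ->
  (forall i j, i != j -> ~~ f (splice (before SV t) (w i) (w j)) \/
                         ~~ f (splice (before SV t) (w j) (w i))) ->
  #|I| <= #|N| ^ c.*2.-1.
Proof.
move=> c_gt0 Hcomp Hord Hw Hfool.
have /fin_all_exists [cross Hcross] :=
  fun i => crossing_witness_exists t c_gt0 Hcomp Hord (Hw i).
suff /leq_card : injective cross by rewrite card_tuple.
move=> i j Hij; apply/eqP; apply: contraT => /Hfool.
have Hj := Hcross j; rewrite -Hij in Hj.
case=> /negP [].
  exact: crossing_witness_splice Hcomp (Hcross i) Hj.
exact: crossing_witness_splice Hcomp Hj (Hcross i).
Qed.

End CrossingSequences.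

Definition cut_matching (V : finType) (e : rel V) (left : pred V) (M : seq (V * V)) :=
  [/\ {in M, forall x, [&& e x.1 x.2, left x.1 & ~~ left x.2]},
      uniq (map fst M) & uniq (map snd M)].

Lemma cut_matching_biclique (V : finType) (e : rel V) (left : pred V) (A B : {set V}) :
  {in A, forall v, left v} -> {in B, forall w, ~~ left w} ->
  {in A & B, forall v w, e v w} ->
  exists M, [/\ cut_matching e left M, size M = minn #|A| #|B| &
    {in M, forall x, (x.1 \in A) && (x.2 \in B)}].
Proof.
move=> HA HB Hadj; set n := minn #|A| #|B|.
set s := take n (enum A); set t := take n (enum B).
have Hs : size s = n by rewrite size_takel // -cardE geq_minl.
have Ht : size t = n by rewrite size_takel // -cardE geq_minr.
have Hfst : map fst (zip s t) = s by apply: unzip1_zip; rewrite Hs Ht.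
have Hsnd : map snd (zip s t) = t by apply: unzip2_zip; rewrite Hs Ht.
have Hmem : {in zip s t, forall x, (x.1 \in A) && (x.2 \in B)}.
  move=> x Hx; apply/andP; split.
    by have := map_f fst Hx; rewrite Hfst => /mem_take; rewrite mem_enum.
  by have := map_f snd Hx; rewrite Hsnd => /mem_take; rewrite mem_enum.
exists (zip s t); split => //; last by rewrite size_zip Hs Ht minnn.
split; [|by rewrite Hfst take_uniq ?enum_uniq|by rewrite Hsnd take_uniq ?enum_uniq].
by move=> x /Hmem /andP [xA xB]; rewrite Hadj // HA // HB.
Qed.

Lemma cut_matching_cat (V : finType) (e : rel V) (left : pred V) M1 M2 :
  cut_matching e left M1 -> cut_matching e left M2 ->
  {in M1 & M2, forall x y, (x.1 != y.1) && (x.2 != y.2)} ->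
  cut_matching e left (M1 ++ M2).
Proof.
move=> [H1 U1 V1] [H2 U2 V2] D; split.
- by move=> x; rewrite mem_cat => /orP [/H1|/H2].
- rewrite map_cat cat_uniq U1 U2 andbT /=; apply/hasPn => _ /mapP [y Hy ->].
  by apply/mapP => [[x Hx Exy]]; have := D x y Hx Hy; rewrite Exy eqxx.
- rewrite map_cat cat_uniq V1 V2 andbT /=; apply/hasPn => _ /mapP [y Hy ->].
  by apply/mapP => [[x Hx Exy]]; have := D x y Hx Hy; rewrite Exy eqxx andbF.
Qed.

Section MatchingFoolingSet.
Variables (V : finType) (e : rel V) (side : pred (cnf_var e)) (M : seq (V * V)).
Hypothesis HM : cut_matching e (fun v => side (inl v)) M.

Definition matched (A : edgeT e) : bool := has (fun x => val A == [set x.1; x.2]) M.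

Definition matching_assignment (S : seq bool) (x : cnf_var e) : bool :=
  match x with
  | inl v => if v \in map fst M then nth false S (index v (map fst M))
             else if v \in map snd M then ~~ nth false S (index v (map snd M))
             else true
  | inr A => ~~ matched A
  end.

Lemma index_map_uniq (f : V * V -> V) x :
  uniq (map f M) -> x \in M -> index (f x) (map f M) = index x M.
Proof.
move=> Hu Hx; have Hj : index x M < size M by rewrite index_mem.
by rewrite -{1}(nth_index x Hx) -(nth_map x (f x)) // index_uniq // size_map.
Qed.

Lemma snd_notin_fst x : x \in M -> x.2 \notin map fst M.
Proof.
case: HM => Hcut _ _ Hx; apply/mapP => [[y Hy Hxy]].
by case/and3P: (Hcut y Hy) => _; rewrite -Hxy; case/and3P: (Hcut x Hx) => _ _ /negPf ->.
Qed.

Lemma matching_assignment_fst S x :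
  x \in M -> matching_assignment S (inl x.1) = nth false S (index x M).
Proof. by case: HM => _ Hu _ Hx /=; rewrite map_f // index_map_uniq. Qed.

Lemma matching_assignment_snd S x :
  x \in M -> matching_assignment S (inl x.2) = ~~ nth false S (index x M).
Proof.
by case: HM => _ _ Hu Hx /=; rewrite (negbTE (snd_notin_fst Hx)) map_f // index_map_uniq.
Qed.

Lemma exists_in_set2 (P : pred V) a b : [exists u in [set a; b], P u] = P a || P b.
Proof.
apply/existsP/orP => [[u /andP []]|].
  by rewrite !inE => /orP [] /eqP -> ?; [left | right].
by case=> H; [exists a | exists b]; rewrite !inE eqxx ?orbT.
Qed.

Lemma CNF_matching_assignment S : CNF (matching_assignment S).
Proof.
apply/forallP => A; case Hm: (matched A); last by rewrite /= Hm.
case/hasP: Hm => x Hx /eqP ->.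
by rewrite exists_in_set2 matching_assignment_fst // matching_assignment_snd // orbN orbT.
Qed.

Lemma matching_assignment_fooling S T x : x \in M ->
  nth false S (index x M) != nth false T (index x M) ->
  ~~ CNF (splice side (matching_assignment S) (matching_assignment T)) \/
  ~~ CNF (splice side (matching_assignment T) (matching_assignment S)).
Proof.
move=> Hx HST; case: HM => Hcut _ _; case/and3P: (Hcut x Hx) => Hxe Hl Hr.
have HA : is_edge_set e [set x.1; x.2].
  by apply/existsP; exists x.1; apply/existsP; exists x.2; rewrite Hxe eqxx.
have Hmatched : matched (Sub _ HA) by apply/hasP; exists x.
have clause_fails a b : nth false a (index x M) = false -> nth false b (index x M) ->
    ~~ CNF (splice side (matching_assignment a) (matching_assignment b)).
  move=> Ha Hb; apply/negP => /forallP /(_ (Sub _ HA)).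
  rewrite exists_in_set2 /splice Hl (negbTE Hr) matching_assignment_fst //.
  by rewrite matching_assignment_snd // Ha Hb /= Hmatched if_same.
move: HST; case HS: (nth false S _); case HT: (nth false T _) => // _.
  by right; apply: clause_fails.
by left; apply: clause_fails.
Qed.

End MatchingFoolingSet.

Lemma cut_matching_lower_bound (V : finType) (e : rel V) (c : nat)
    (N E : finType) (src dst : E -> N) (lab : E -> option (cnf_var e * bool))
    (root leaf : N) (SV : seq (cnf_var e)) t M :
  0 < c -> computes src dst lab root leaf (@CNF V e) ->
  ordered_paths src dst lab root leaf c SV ->
  cut_matching e (fun v => before SV t (inl v)) M ->
  2 ^ size M <= #|N| ^ c.*2.-1.
Proof.
move=> c_gt0 Hcomp Hord HM.
have := fooling_set_bound (t := t) (w := fun S : (size M).-tuple bool => matching_assignment M S)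
  c_gt0 Hcomp Hord (fun S => CNF_matching_assignment HM S).
rewrite card_tuple card_bool; apply=> S T HST.
have /existsP [j Hj] : [exists j, tnth S j != tnth T j].
  by apply: contraNT HST => /existsPn Heq; apply/eqP/eq_from_tnth => j; apply/eqP/negPn/Heq.
have HuM : uniq M by case: HM => _ Hu _; exact: map_uniq Hu.
pose x := tnth (in_tuple M) j.
have Hidx : index x M = j by rewrite /x (tnth_nth x) index_uniq.
apply: (matching_assignment_fooling HM (mem_tnth j (in_tuple M))).
by rewrite -/x Hidx -!tnth_nth.
Qed.

Lemma unit_step_ivt (f : nat -> nat) j T : f 0 = 0 ->
  (forall n, f n.+1 <= (f n).+1) -> j <= f T -> exists t, f t = j.
Proof.
move=> f0 fS; elim: T => [|T IH] HT; first by exists 0; apply/eqP; rewrite eqn_leq HT f0.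
have [/IH //|HfT] := leqP j (f T).
by exists T.+1; apply/eqP; rewrite eqn_leq HT andbT; have := fS T; lia.
Qed.

Section Thresholds.
Variables (T : finType) (pos : T -> nat).
Hypothesis pos_inj : injective pos.

Lemma exists_threshold (A : {set T}) j : j <= #|A| ->
  exists t, #|[set v in A | pos v < t]| = j.
Proof.
pose f t := #|[set v in A | pos v < t]|.
have f0 : f 0 = 0 by apply/eqP; rewrite cards_eq0; apply/eqP/setP => v; rewrite !inE ltn0 andbF.
have fT : f (\max_v (pos v).+1) = #|A|.
  by apply: eq_card => v; rewrite !inE (leq_bigmax v) andbT.
move=> Hj; have HfT : j <= f (\max_v (pos v).+1) by rewrite fT.
apply: (unit_step_ivt f0 _ HfT) => n.
have sub : [set v in A | pos v < n.+1] \subset [set v in A | pos v < n] :|: [set v | pos v == n].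
  by apply/subsetP => v; rewrite !inE ltnS leq_eqVlt => /andP [-> /orP [->|->]]; rewrite ?orbT.
apply: (leq_trans (subset_leq_card sub)); apply: (leq_trans (leq_card_setU _ _)).
rewrite -addn1 leq_add2l; apply/card_le1P => u; rewrite inE => /eqP Hu w.
by rewrite !inE; apply/eqP/eqP => [Hw|->] //; apply: pos_inj; rewrite Hw Hu.
Qed.

End Thresholds.

Lemma divn_pow2D n a b : n %/ 2 ^ a %/ 2 ^ b = n %/ 2 ^ (a + b).
Proof. by rewrite -divnMA -expnD. Qed.

Lemma divn_pow2_mono n a b : a <= b -> n %/ 2 ^ b <= n %/ 2 ^ a.
Proof. by move=> Hab; apply: leq_div2l; rewrite ?expn_gt0 ?leq_pexp2l. Qed.

Lemma divn_pow2_window n e f m : 0 < m ->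
  m <= n %/ 2 ^ e < m.*2 -> m <= n %/ 2 ^ f < m.*2 -> n %/ 2 ^ e = n %/ 2 ^ f.
Proof.
wlog ef : e f / e <= f => [W|m_gt0 He Hf].
  by move=> m0 He Hf; case: (leqP e f) => ef; [|symmetry]; apply: W => //; apply: ltnW.
move: Hf; rewrite -(subnKC ef) -divn_pow2D.
case: (f - e) => [|j]; first by rewrite expn0 divn1.
move=> Hf; have := divn_pow2_mono (n %/ 2 ^ e) (isT : 1 <= j.+1).
by rewrite expn1 divn2; move: He Hf; set q := n %/ 2 ^ e; set q' := _ %/ _; lia.
Qed.

Section HeapTree.
Variable r : nat.
Local Notation TN := (Tnode r).

Definition heap (a : TN) : nat := (a : nat).+1.

Lemma heap_inj : injective heap.
Proof. by move=> a b [] /val_inj. Qed.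

Lemma tparent_subproof (a : TN) : ((heap a)./2).-1 < 2 ^ r.+1 - 1.
Proof. by have := ltn_ord a; rewrite /heap; lia. Qed.

Definition tparent (a : TN) : TN := Ordinal (tparent_subproof a).

Lemma heap_tparent a : 2 <= heap a -> heap (tparent a) = (heap a)./2.
Proof. by rewrite /heap /=; lia. Qed.

Lemma Tadj_sym : symmetric (@Tadj r).
Proof. by move=> a b; rewrite /Tadj orbC. Qed.

Lemma Tadj_neq (a b : TN) : Tadj a b -> a != b.
Proof. by apply: contraTneq => ->; rewrite /Tadj /Tchild orbb; lia. Qed.

Lemma Tadj_tparent a : 2 <= heap a -> Tadj a (tparent a).
Proof.
move=> Ha; rewrite /Tadj /Tchild; apply/orP; right.
by move: (heap_tparent Ha); rewrite /heap => ->; lia.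
Qed.

Lemma heap_iter_tparent i a : 0 < heap a %/ 2 ^ i ->
  heap (iter i tparent a) = heap a %/ 2 ^ i.
Proof.
elim: i => [|i IH] Hi; first by rewrite divn1.
have Hdiv : heap a %/ 2 ^ i.+1 = (heap a %/ 2 ^ i)./2.
  by rewrite -divn2 -(expn1 2) divn_pow2D addn1.
rewrite iterS heap_tparent IH ?Hdiv //; move: Hi; rewrite Hdiv; lia.
Qed.

Definition in_subtree (p h : nat) (a : TN) : bool :=
  has (fun d => heap a %/ 2 ^ d == p) (iota 0 h.+1).

Lemma in_subtreeP p h a :
  reflect (exists2 d, d <= h & heap a %/ 2 ^ d = p) (in_subtree p h a).
Proof.
apply: (iffP hasP) => [[d]|[d Hd Ed]].
  by rewrite mem_iota ltnS => Hd /eqP; exists d.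
by exists d; rewrite ?mem_iota ?ltnS ?Ed.
Qed.

Lemma in_subtree_widen p h h' a : h <= h' -> in_subtree p h a -> in_subtree p h' a.
Proof.
by move=> Hh /in_subtreeP [d Hd Ed]; apply/in_subtreeP; exists d => //; apply: leq_trans Hh.
Qed.

Lemma in_subtree_grandchild g p h a :
  4 * p <= g < 4 * p + 4 -> in_subtree g h a -> in_subtree p h.+2 a.
Proof.
move=> Hg /in_subtreeP [d Hd Ed]; apply/in_subtreeP; exists d.+2 => //.
by rewrite -(addn2 d) -divn_pow2D Ed; lia.
Qed.

Section GrandchildSubtree.
Variables (p d g : nat) (x : TN).
Hypotheses (p_gt0 : 0 < p) (Hx : heap x %/ 2 ^ d = g) (Hg : 4 * p <= g < 4 * p + 4).

Lemma heap_ancestor i : i <= d.+2 -> heap (iter i tparent x) = heap x %/ 2 ^ i.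
Proof.
move=> Hi; apply: heap_iter_tparent.
have : heap x %/ 2 ^ d.+2 <= heap x %/ 2 ^ i by apply: divn_pow2_mono.
by rewrite -(addn2 d) -divn_pow2D Hx; lia.
Qed.

Lemma heap_top_ancestor : heap (iter d.+2 tparent x) = p.
Proof. by rewrite heap_ancestor // -(addn2 d) -divn_pow2D Hx; lia. Qed.

Lemma ancestor_has_parent i : i < d.+2 -> 2 <= heap (iter i tparent x).
Proof.
move=> Hi; rewrite heap_ancestor; last exact: ltnW.
have : heap x %/ 2 ^ d.+1 <= heap x %/ 2 ^ i by apply: divn_pow2_mono.
by rewrite -(addn1 d) -divn_pow2D Hx expn1; lia.
Qed.

Lemma ancestor_in_subtree i : i <= d.+2 -> in_subtree p d.+2 (iter i tparent x).
Proof.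
move=> Hi; apply/in_subtreeP; exists (d.+2 - i); first exact: leq_subr.
by rewrite heap_ancestor // divn_pow2D subnKC // -(addn2 d) -divn_pow2D Hx; lia.
Qed.

Lemma ancestor_notin_sibling i g' h' : i <= d.+2 ->
  4 * p <= g' < 4 * p + 4 -> g' != g -> ~~ in_subtree g' h' (iter i tparent x).
Proof.
move=> Hi Hg' ne; apply/in_subtreeP => -[e _]; rewrite heap_ancestor // divn_pow2D => He.
move/eqP: ne; apply; rewrite -He -Hx; apply: (@divn_pow2_window _ _ _ (4 * p)).
- by rewrite muln_gt0.
- by rewrite He; lia.
- by rewrite Hx; lia.
Qed.

End GrandchildSubtree.

End HeapTree.

Arguments tparent {r}.

Section CliqueTree.
Variables r k : nat.
Local Notation V := (CTvert r k).
Local Notation TN := (Tnode r).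

Definition nleft (L : pred V) (a : TN) : nat := #|[set v : V | (v.1 == a) && L v]|.

Definition nleft2 (L : pred V) (a b : TN) : nat := nleft L a + nleft L b.

Lemma card_clique (a : TN) : #|[set v : V | v.1 == a]| = k.
Proof.
have -> : [set v : V | v.1 == a] = setX [set a] [set: 'I_k].
  by apply/setP => v; rewrite !inE andbT.
by rewrite cardsX cards1 cardsT card_ord mul1n.
Qed.

Lemma nleft_addC L a : nleft L a + nleft (predC L) a = k.
Proof.
rewrite -[RHS](card_clique a) /nleft -(cardsID [set v : V | L v] [set v : V | v.1 == a]).
by congr (_ + _); apply: eq_card => v; rewrite !inE andbC.
Qed.

Lemma nleftC L a : nleft (predC L) a = k - nleft L a.
Proof. by have := nleft_addC L a; lia. Qed.

Lemma nleft_le L a : nleft L a <= k.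
Proof. by have := nleft_addC L a; lia. Qed.

Lemma card_clique2 (P : pred V) (a b : TN) : a != b ->
  #|[set v : V | ((v.1 == a) || (v.1 == b)) && P v]| = nleft2 P a b.
Proof.
move=> ab; rewrite /nleft2 /nleft -cardsUI.
have -> : [set v : V | (v.1 == a) && P v] :&: [set v : V | (v.1 == b) && P v] = set0.
  apply/setP => v; rewrite !inE; apply/negP => /andP [/andP [/eqP -> _] /andP [/eqP Eb _]].
  by rewrite Eb eqxx in ab.
by rewrite cards0 addn0; apply: eq_card => v; rewrite !inE andb_orl.
Qed.

Lemma nleft2_sym L a b : nleft2 L a b = nleft2 L b a.
Proof. by rewrite /nleft2 addnC. Qed.

Definition supported_on (S : pred TN) (M : seq (V * V)) :=
  {in M, forall x, (x.1.1 \in S) && (x.2.1 \in S)}.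

Lemma supported_on_sub (S S' : pred TN) M :
  {subset S <= S'} -> supported_on S M -> supported_on S' M.
Proof. by move=> HS H x /H /andP [/HS -> /HS ->]. Qed.

Lemma CTadj_near (v w : V) : v != w -> (v.1 == w.1) || Tadj v.1 w.1 -> CTadj v w.
Proof.
move=> vw /orP [/eqP E|H]; rewrite /CTadj; last by rewrite H orbT.
rewrite E eqxx /=; apply/orP; left; apply: contraNneq vw => E2.
by case: v w E E2 => [? ?] [? ?] /= -> ->.
Qed.

Definition large_matching (L : pred V) (S : pred TN) :=
  exists M, [/\ cut_matching (@CTadj r k) L M, k <= size M & supported_on S M].

Lemma large_matching_sub L (S S' : pred TN) :
  {subset S <= S'} -> large_matching L S -> large_matching L S'.
Proof. by move=> HS [M [HM Hsz Hin]]; exists M; split => //; apply: supported_on_sub Hin. Qed.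

(* The two cliques of a tree edge together form a clique of CT_{r,k}. *)
Lemma large_matching_balanced L (a b : TN) : Tadj a b -> nleft2 L a b = k ->
  large_matching L (pred2 a b).
Proof.
move=> Hab Hk; have ab := Tadj_neq Hab.
pose A := [set v : V | ((v.1 == a) || (v.1 == b)) && L v].
pose B := [set v : V | ((v.1 == a) || (v.1 == b)) && predC L v].
have cA : #|A| = k by rewrite card_clique2.
have cB : #|B| = k.
  rewrite card_clique2 // /nleft2 !nleftC; move: Hk; rewrite /nleft2.
  by have := nleft_le L a; have := nleft_le L b; lia.
have [|||M [HM Hsz Hin]] := @cut_matching_biclique _ (@CTadj r k) L A B.
- by move=> v; rewrite inE => /andP [].
- by move=> v; rewrite inE => /andP [].
- move=> v w; rewrite !inE => /andP [Hv Lv] /andP [Hw Lw].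
  apply: CTadj_near; first by apply: contraNneq Lw => <-.
  case/orP: Hv => /eqP ->; case/orP: Hw => /eqP ->; rewrite ?eqxx //.
    by rewrite Hab orbT.
  by rewrite Tadj_sym Hab orbT.
exists M; split => //; first by rewrite Hsz cA cB minnn.
by move=> x /Hin /andP []; rewrite !inE => /andP [-> _] /andP [-> _].
Qed.

(* Match the [L]-vertices of [b] into [c], and those of [a] into [a] and [b]. *)
Lemma large_matching_crossing L (a b c : TN) : Tadj a b -> Tadj b c -> a != c ->
  k < nleft2 L a b -> nleft2 L b c < k ->
  large_matching L [pred u | [|| u == a, u == b | u == c]].
Proof.
move=> Hab Hbc ac H1 H2; have ab := Tadj_neq Hab; have bc := Tadj_neq Hbc.
pose A1 := [set v : V | (v.1 == b) && L v].
pose B1 := [set v : V | (v.1 == c) && predC L v].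
pose A2 := [set v : V | (v.1 == a) && L v].
pose B2 := [set v : V | ((v.1 == a) || (v.1 == b)) && predC L v].
have [|||M1 [HM1 Hsz1 Hin1]] := @cut_matching_biclique _ (@CTadj r k) L A1 B1.
- by move=> v; rewrite inE => /andP [].
- by move=> v; rewrite inE => /andP [].
- move=> v w; rewrite !inE => /andP [/eqP Hv Lv] /andP [/eqP Hw Lw].
  by apply: CTadj_near; [apply: contraNneq Lw => <- | rewrite Hv Hw Hbc orbT].
have [|||M2 [HM2 Hsz2 Hin2]] := @cut_matching_biclique _ (@CTadj r k) L A2 B2.
- by move=> v; rewrite inE => /andP [].
- by move=> v; rewrite inE => /andP [].
- move=> v w; rewrite !inE => /andP [/eqP Hv Lv] /andP [Hw Lw].
  apply: CTadj_near; first by apply: contraNneq Lw => <-.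
  by rewrite Hv; case/orP: Hw => /eqP ->; rewrite ?eqxx // Hab orbT.
exists (M1 ++ M2); split.
- apply: cut_matching_cat => // x y /Hin1 /andP [] Hx1 Hx2 /Hin2 /andP [] Hy1 Hy2.
  move: Hx1 Hx2 Hy1 Hy2; rewrite !inE => /andP [/eqP Hx1 _] /andP [/eqP Hx2 _].
  move=> /andP [/eqP Hy1 _] /andP [Hy2 _].
  apply/andP; split; apply: contra_neq ab => E.
    by rewrite -Hx1 -Hy1 E.
  by exfalso; move: Hy2; rewrite -E Hx2 => /orP [] /eqP E2; move: ac bc; rewrite E2 eqxx.
- rewrite size_cat Hsz1 Hsz2 card_clique2 // /nleft2 /A1 /B1 /A2.
  rewrite -/(nleft L b) -/(nleft (predC L) c) -/(nleft L a) !nleftC.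
  move: H1 H2; rewrite /nleft2.
  by have := nleft_le L a; have := nleft_le L b; have := nleft_le L c; lia.
- move=> x; rewrite mem_cat => /orP [/Hin1|/Hin2]; rewrite !inE.
    by case/andP => /andP [-> _] /andP [-> _]; rewrite !orbT.
  by case/andP => /andP [-> _] /andP [/orP [] -> _]; rewrite ?orbT.
Qed.

(* A discrete intermediate value argument along the walk. *)
Lemma large_matching_walk L n (u : nat -> TN) : 0 < n ->
  (forall i, i < n -> Tadj (u i) (u i.+1)) ->
  k <= nleft2 L (u 0) (u 1) -> nleft2 L (u n.-1) (u n) <= k ->
  large_matching L [pred a | [exists i : 'I_n.+1, a == u i]].
Proof.
have onwalk n' (u' : nat -> TN) i : i <= n' -> [exists j : 'I_n'.+1, u' i == u' j].
  by move=> Hi; apply/existsP; exists (Ordinal (Hi : i < n'.+1)).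
elim: n u => [|n IH] u // _ Hadj.
have [Hk _ _|Hk H1 Hend] := eqVneq (nleft2 L (u 0) (u 1)) k.
  apply: large_matching_sub (large_matching_balanced (Hadj 0 isT) Hk).
  by move=> a /pred2P [] ->; apply: onwalk.
case: n IH Hadj Hend => [|n] IH Hadj Hend.
  by move: Hk; rewrite eqn_leq H1 Hend.
have H1' : k < nleft2 L (u 0) (u 1) by rewrite ltn_neqAle eq_sym Hk.
have [H2|H2] := leqP k (nleft2 L (u 1) (u 2)).
  have /IH : 0 < n.+1 by [].
  move=> /(_ (fun i => u i.+1) (fun i Hi => Hadj i.+1 Hi) H2 Hend).
  apply: large_matching_sub => a /existsP [j /eqP ->].
  by apply/existsP; exists (lift ord0 j).
have ac : u 0 != u 2.
  by apply: contraTneq H2 => E; rewrite -E nleft2_sym -leqNgt ltnW.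
apply: large_matching_sub (large_matching_crossing (Hadj 0 isT) (Hadj 1 isT) ac H1' H2).
by move=> a /or3P [] /eqP ->; apply: onwalk.
Qed.

Definition ancestors (x : TN) (d : nat) : pred TN :=
  [pred a : TN | [exists i : 'I_d.+1, a == iter i tparent x]].

(* The walk climbs from [xy] to their common ancestor [p] and descends to [xz]. *)
Lemma large_matching_between (L : pred V) p dy dz gy gz (xy xz : TN) : 0 < p ->
  heap xy %/ 2 ^ dy = gy -> 4 * p <= gy < 4 * p + 4 ->
  heap xz %/ 2 ^ dz = gz -> 4 * p <= gz < 4 * p + 4 ->
  k <= nleft2 L xy (tparent xy) -> nleft2 L xz (tparent xz) <= k ->
  large_matching L [predU ancestors xy dy.+2 & ancestors xz dz.+2].
Proof.
move=> p_gt0 Hy Hgy Hz Hgz Hky Hkz.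
have top : iter dy.+2 tparent xy = iter dz.+2 tparent xz.
  by apply: heap_inj; rewrite (heap_top_ancestor p_gt0 Hy Hgy) (heap_top_ancestor p_gt0 Hz Hgz).
set n := dy.+2 + dz.+2.
pose u i := if i <= dy.+2 then iter i tparent xy else iter (n - i) tparent xz.
have u_lo i : i <= dy.+2 -> u i = iter i tparent xy by rewrite /u => ->.
have u_hi i : dy.+2 <= i -> u i = iter (n - i) tparent xz.
  rewrite /u leq_eqVlt => /orP [/eqP <-|]; first by rewrite leqnn top addKn.
  by rewrite ltnNge => /negbTE ->.
have Hwalk : large_matching L [pred a | [exists i : 'I_n.+1, a == u i]].
  apply: large_matching_walk => [//|i Hi||].
  - have [Hi'|Hi'] := ltnP i dy.+2.
      rewrite !u_lo ?iterS //; last exact: ltnW.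
      exact: Tadj_tparent (ancestor_has_parent p_gt0 Hy Hgy Hi').
    rewrite !u_hi ?(leq_trans Hi') //; have -> : n - i = (n - i.+1).+1 by lia.
    rewrite iterS Tadj_sym; apply: Tadj_tparent.
    by apply: (ancestor_has_parent p_gt0 Hz Hgz); lia.
  - by rewrite !u_lo.
  - have Hn1 : dy.+2 <= n.-1 by rewrite /n addnS leq_addr.
    rewrite (u_hi n.-1 Hn1) (u_hi n (leq_addr _ _)) subnn (_ : n - n.-1 = 1) 1?nleft2_sym //.
    by rewrite /n addnS subSnn.
apply: large_matching_sub Hwalk => a /existsP [[i Hi] /eqP -> /=].
have [Hi'|Hi'] := leqP i dy.+2.
  by rewrite u_lo // inE; apply/orP; left; apply/existsP; exists (Ordinal (Hi' : i < dy.+3)).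
have Hni : n - i < dz.+3 by lia.
rewrite u_hi ?inE; last exact: ltnW.
by apply/orP; right; apply/existsP; exists (Ordinal Hni).
Qed.

End CliqueTree.

Lemma median_of_three (t : nat -> nat) :
  exists y x z, [/\ [&& y < 3, x < 3 & z < 3], x != y, x != z & t y <= t x <= t z].
Proof.
have [h01|h01] := leqP (t 0) (t 1); have [h12|h12] := leqP (t 1) (t 2);
  have [h02|h02] := leqP (t 0) (t 2);
  first [ by exists 0, 1, 2; split => //; lia | by exists 0, 2, 1; split => //; lia
        | by exists 1, 0, 2; split => //; lia | by exists 1, 2, 0; split => //; lia
        | by exists 2, 0, 1; split => //; lia | by exists 2, 1, 0; split => //; lia
        | lia ].
Qed.

Section CutStates.
Variables (r k : nat) (pos : CTvert r k -> nat).
Hypothesis pos_inj : injective pos.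
Local Notation V := (CTvert r k).
Local Notation TN := (Tnode r).

Definition below (t : nat) : pred V := fun v => pos v < t.

Lemma nleft2_below_mono t t' (a b : TN) : t <= t' ->
  nleft2 (below t) a b <= nleft2 (below t') a b.
Proof.
move=> Htt'; have mono c : nleft (below t) c <= nleft (below t') c.
  apply: subset_leq_card; apply/subsetP => v; rewrite !inE /below.
  by case/andP => -> /leq_trans ->.
by rewrite leq_add.
Qed.

Definition cut_state (p h t G : nat) :=
  [/\ exists M, [/\ cut_matching (@CTadj r k) (below t) M, G <= size M &
                    supported_on (in_subtree p h) M],
      exists2 x, in_subtree p h x & k <= nleft2 (below t) x (tparent x) &
      exists2 x, in_subtree p h x & nleft2 (below t) x (tparent x) <= k].

Lemma cut_state_base p h : 0 < h -> 0 < p -> p.+1 * 2 ^ h <= 2 ^ r.+1 ->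
  exists t, cut_state p h t k.
Proof.
move=> h_gt0 p_gt0 Hsz.
have Hfit : (p.+1).*2 <= 2 ^ r.+1.
  by apply: leq_trans Hsz; rewrite -muln2 leq_mul2l -(expn1 2) leq_exp2l.
have Ha : p.-1 < 2 ^ r.+1 - 1 by lia.
have Hb : (p.*2).-1 < 2 ^ r.+1 - 1 by lia.
pose a : TN := Ordinal Ha; pose b : TN := Ordinal Hb.
have heap_a : heap a = p by rewrite /heap /=; lia.
have heap_b : heap b = p.*2 by rewrite /heap /=; lia.
have parent_b : tparent b = a.
  by apply: heap_inj; rewrite heap_tparent heap_b ?heap_a ?doubleK //; lia.
have ba : b != a by apply/eqP => E; move: heap_b; rewrite E heap_a; lia.
have [t Ht] : exists t, #|[set v in [set v : V | (v.1 == b) || (v.1 == a)] | pos v < t]| = k.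
  apply: exists_threshold => //.
  have all_left (c : TN) : nleft (predT : pred V) c = k.
    by rewrite -[RHS](card_clique k c) /nleft; apply: eq_card => v; rewrite !inE andbT.
  rewrite (@eq_card _ _ [set v : V | ((v.1 == b) || (v.1 == a)) && predT v]); last first.
    by move=> v; rewrite !inE andbT.
  by rewrite card_clique2 // /nleft2 !all_left leq_addr.
have Hk : nleft2 (below t) b (tparent b) = k.
  by rewrite parent_b -card_clique2 // -[RHS]Ht; apply: eq_card => v; rewrite !inE.
have in_b : in_subtree p h b by apply/in_subtreeP; exists 1; rewrite // heap_b expn1 divn2 doubleK.
have in_a : in_subtree p h a by apply/in_subtreeP; exists 0; rewrite // heap_a divn1.
have heap_b2 : 2 <= heap b by rewrite heap_b; lia.
have [M [HM HszM HsuppM]] := large_matching_balanced (Tadj_tparent heap_b2) Hk.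
exists t; split; [|by exists b; rewrite ?Hk..].
exists M; split => //; apply: supported_on_sub HsuppM => c.
by rewrite parent_b => /pred2P [] ->.
Qed.

(* The matching of the middle grandchild survives, and the walk between the
   witnesses of the outer two adds [k] pairs disjoint from it. *)
Lemma cut_state_step p h gy gx gz ty tx tz G : 0 < p ->
  4 * p <= gy < 4 * p + 4 -> 4 * p <= gx < 4 * p + 4 -> 4 * p <= gz < 4 * p + 4 ->
  gx != gy -> gx != gz -> ty <= tx <= tz ->
  cut_state gy h ty G -> cut_state gx h tx G -> cut_state gz h tz G ->
  cut_state p h.+2 tx (G + k).
Proof.
move=> p_gt0 Hgy Hgx Hgz nxy nxz /andP [Hyx Hxz] [_ [xy Hxy Hky] _]
  [[Mx [HMx HszX HinX]] _ _] [_ _ [xz Hxz' Hkz]].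
case/in_subtreeP: Hxy => dy Hdy Ey; case/in_subtreeP: Hxz' => dz Hdz Ez.
pose good := [pred a : TN | in_subtree p h.+2 a && ~~ in_subtree gx h a].
have ancestors_good (x : TN) d g : heap x %/ 2 ^ d = g -> 4 * p <= g < 4 * p + 4 ->
    gx != g -> d <= h -> {subset ancestors x d.+2 <= good}.
  move=> Ex Hg ne Hd _ /existsP [[i Hi] /eqP ->]; rewrite inE.
  rewrite (in_subtree_widen _ (ancestor_in_subtree p_gt0 Ex Hg Hi)) //.
  by rewrite (ancestor_notin_sibling p_gt0 Ex Hg _ Hi Hgx).
have Hky' := leq_trans Hky (nleft2_below_mono _ _ Hyx).
have Hkz' := leq_trans (nleft2_below_mono _ _ Hxz) Hkz.
have [M' [HM' HszM' HinM']] : large_matching (below tx) good.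
  apply: large_matching_sub (large_matching_between p_gt0 Ey Hgy Ez Hgz Hky' Hkz').
  by move=> a /orP []; [apply: (ancestors_good _ _ _ Ey) | apply: (ancestors_good _ _ _ Ez)].
have xy_good : good xy by apply: (ancestors_good _ _ _ Ey) => //; apply/existsP; exists ord0.
have xz_good : good xz by apply: (ancestors_good _ _ _ Ez) => //; apply/existsP; exists ord0.
split; [|by exists xy; case/andP: xy_good|by exists xz; case/andP: xz_good].
exists (Mx ++ M'); split.
- apply: cut_matching_cat => // x y /HinX /andP [Hx1 Hx2] /HinM' /andP [].
  move=> /andP [_ Hy1] /andP [_ Hy2].
  by apply/andP; split; [apply: contraNneq Hy1 => <- | apply: contraNneq Hy2 => <-].
- by rewrite size_cat leq_add.
- move=> x; rewrite mem_cat => /orP [/HinX /andP [H1 H2] | /HinM' /andP []].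
    by apply/andP; split; apply: (in_subtree_grandchild Hgx).
  by move=> /andP [H1 _] /andP [H2 _]; apply/andP.
Qed.

Lemma cut_state_subtree h : 0 < h -> forall p, 0 < p -> p.+1 * 2 ^ h <= 2 ^ r.+1 ->
  exists t, cut_state p h t (k * (h.+1)./2).
Proof.
elim/ltn_ind: h => h IH h_gt0 p p_gt0 Hsz.
have [small|] := leqP h 2.
  by rewrite (_ : (h.+1)./2 = 1) ?muln1; [apply: cut_state_base | lia].
case: h IH h_gt0 Hsz => [|[|h]] // IH _ Hsz h_gt0.
have Hg j : j < 3 -> exists t, cut_state (4 * p + j) h t (k * (h.+1)./2).
  move=> Hj; apply: IH; [lia | lia | lia |].
  apply: leq_trans Hsz; have -> : p.+1 * 2 ^ h.+2 = (4 * p + 4) * 2 ^ h.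
    by rewrite !expnS !mulnA; congr (_ * _); lia.
  by rewrite leq_mul2r; apply/orP; right; lia.
have [t0 H0] := Hg 0 isT; have [t1 H1] := Hg 1 isT; have [t2 H2] := Hg 2 isT.
pose t j := nth 0 [:: t0; t1; t2] j.
have Ht j : j < 3 -> cut_state (4 * p + j) h (t j) (k * (h.+1)./2).
  by case: j => [|[|[|]]].
have [y [x [z [/and3P [Hy Hx Hz] nxy nxz Htyxz]]]] := median_of_three t.
exists (t x); rewrite (_ : (h.+3)./2 = (h.+1)./2 + 1) ?mulnDr ?muln1; last by lia.
by apply: (cut_state_step p_gt0 _ _ _ _ _ Htyxz (Ht y Hy) (Ht x Hx) (Ht z Hz)); lia.
Qed.

Lemma exists_large_cut_matching :
  exists t M, cut_matching (@CTadj r k) (below t) M /\ r * k <= (size M).*2.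
Proof.
have [r0 | r_gt0] := posnP r; first by exists 0, [::]; split => //=; rewrite r0.
have Hsz : 2 * 2 ^ r <= 2 ^ r.+1 by rewrite expnS.
have [t [[M [HM HszM _]] _ _]] := cut_state_subtree r_gt0 (isT : 0 < 1) Hsz.
exists t, M; split => //; rewrite -leq_double in HszM; apply: leq_trans HszM.
by rewrite doubleMr mulnC leq_mul2l; apply/orP; right; lia.
Qed.

End CutStates.

Section RealBound.
Local Open Scope R_scope.

Lemma INR_expn (m n : nat) : INR (m ^ n)%N = INR m ^ n.
Proof. by elim: n => // n IH; rewrite expnS -multE mult_INR IH. Qed.

Lemma INR_double (n : nat) : INR n.*2 = 2 * INR n.
Proof. by rewrite -muln2 -multE mult_INR /=; lra. Qed.

(* [2 ^ (a / 2e) <= (2 ^ m) ^ (1 / e) <= (n ^ e) ^ (1 / e) = n]. *)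
Lemma Rpower_le_of_expn (n m e a : nat) : (0 < e)%N -> (2 ^ m <= n ^ e)%N ->
  (a <= m.*2)%N -> Rpower (INR 2) (INR a / INR e.*2) <= INR n.
Proof.
move=> e_gt0 Hmn Ha.
have n_gt0 : (0 < n)%N.
  by move: (leq_trans (expn_gt0 2 m) Hmn); rewrite expn_gt0 (negbTE (lt0n_neq0 e_gt0)) orbF.
have He : 0 < INR e by apply: lt_0_INR; apply/ltP.
have Hn : 0 < INR n by apply: lt_0_INR; apply/ltP.
have Ha' : INR a <= 2 * INR m by rewrite -INR_double; apply: le_INR; apply/leP.
have Hmn' : 2 ^ m <= INR n ^ e.
  by rewrite -INR_expn -(INR_expn 2); apply: le_INR; apply/leP.
have H2 : INR 2 = 2 by rewrite /=; lra.
apply: Rle_trans (_ : Rpower (Rpower (INR 2) (INR m)) (/ INR e) <= _).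
  rewrite Rpower_mult; apply: Rle_Rpower; first by rewrite H2; lra.
  rewrite INR_double /Rdiv Rinv_mult; apply: (Rmult_le_reg_l (2 * INR e)); first lra.
  by field_simplify; lra.
rewrite Rpower_pow H2; last lra.
apply: Rle_trans (_ : Rpower (INR n ^ e) (/ INR e) <= _).
  apply: Rle_Rpower_l; first by left; apply: Rinv_0_lt_compat.
  by split => //; apply: pow_lt; lra.
by rewrite -(Rpower_pow e _ Hn) Rpower_mult Rinv_r ?Rpower_1 //; lra.
Qed.

End RealBound.

Theorem theorem1 (c r k : nat) (hc : 1 <= c) (hk : 1 <= k)
  (N E : finType) (src dst : E -> N) (lab : E -> option (Fvar r k * bool))
  (root leaf : N) :
  is_BP src dst root leaf ->
  computes src dst lab root leaf (@F r k) ->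
  NSOBDD src dst lab c root leaf ->
  Rdefinitions.Rle (Rpower.Rpower (Raxioms.INR 2) (Rdefinitions.Rdiv (Raxioms.INR (r * k)) (Raxioms.INR (4 * c - 2)))) (Raxioms.INR #|N|).
Proof.
move=> _ Hcomp [SV [HSV Hord]].
have inSV (x : Fvar r k) : x \in SV by rewrite (perm_mem HSV) mem_enum.
pose pos (v : CTvert r k) := index (inl v : Fvar r k) SV.
have pos_inj : injective pos.
  by move=> u v /(index_inj (inl u) (inSV _) (inSV _)) [].
have [t [M [HM HrM]]] := exists_large_cut_matching pos_inj.
have Hsize := cut_matching_lower_bound hc Hcomp Hord HM.
rewrite (_ : 4 * c - 2 = (c.*2.-1).*2); last by lia.
by apply: Rpower_le_of_expn Hsize HrM; lia.
Qed.
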